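(* Let $E$ be a countable directed graph, $x=x_0x_1\cdots\in E^\infty$, and $\beta\in(-\infty,0)$. If the orbit $[x]$ is $\beta$-summable, then $E^*s(x_i)$ is finite for every $i\ge0$, $s(x_i)\neq s(x_j)$ whenever $i\neq j$, and there exists $\mu\in E^*$ such that $s(\mu)$ is a source and $r(\mu)=s(x)$.
   Context: Directed graph conventions: paths $\mu=\mu_0\cdots\mu_{n-1}$ with $r(\mu_i)=s(\mu_{i+1})$, vertices as paths of length $0$, $E^*$ the finite paths, $E^*v=\{\mu\in E^*:r(\mu)=v\}$; $E^\infty$ the infinite paths $x=x_0x_1\cdots$ with $r(x_i)=s(x_{i+1})$, $s(x)=s(x_0)$. A vertex is a source if it receives no edges. The orbit (tail equivalence class) of $x\in E^\infty$ is $[x]=\{y\in E^\infty:\exists n,m\ge0,\ y_{i+m}=x_{i+n}\ \forall i\ge0\}$. $[x]$ is consistent if $x$ is not eventually periodic; then for $y\in[x]$ written $y=\mu z$, $x=\nu z$ with $\mu,\nu$ finite paths and $z\in E^\infty$, $l_x(y):=e^{-(|\mu|-|\nu|)}$ is well defined. $[x]$ is $\beta$-summable if it is consistent and $\sum_{y\in[x]}l_x(y)^\beta<\infty$. *)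

From Stdlib Require Import Reals List.
Import ListNotations.
Open Scope R_scope.

Record graph := Graph {
  Vert : Type;
  Edge : Type;
  src : Edge -> Vert;
  rng : Edge -> Vert
}.

Definition countable (T : Type) : Prop :=
  exists f : T -> nat, forall a b, f a = f b -> a = b.

Definition countable_graph (E : graph) : Prop :=
  countable (Vert E) /\ countable (Edge E).

(* Finite paths: a pair (v, l); if l = [] it is the vertex v (length 0),
   otherwise l = mu_0 ... mu_{n-1} with s(mu_0) = v and r(mu_i) = s(mu_{i+1}). *)
Fixpoint chain (E : graph) (l : list (Edge E)) : Prop :=
  match l with
  | [] => True
  | e :: l' =>
      match l' with
      | [] => True
      | f :: _ => rng E e = src E f /\ chain E l'
      end
  end.

Definition fpath (E : graph) := (Vert E * list (Edge E))%type.

Definition valid_fpath (E : graph) (p : fpath E) : Prop :=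
  match snd p with
  | [] => True
  | e :: _ => src E e = fst p /\ chain E (snd p)
  end.

Definition fsrc (E : graph) (p : fpath E) : Vert E := fst p.

Definition frng (E : graph) (p : fpath E) : Vert E :=
  match snd p with
  | [] => fst p
  | e :: l => rng E (last l e)
  end.

Definition finite_paths_into (E : graph) (v : Vert E) : Prop :=
  exists L : list (fpath E),
    forall p, valid_fpath E p -> frng E p = v -> In p L.

Definition is_source (E : graph) (v : Vert E) : Prop :=
  forall e : Edge E, rng E e <> v.

Definition ipath (E : graph) (x : nat -> Edge E) : Prop :=
  forall i, rng E (x i) = src E (x (S i)).

(* y = mu z, x = nu z with |mu| = m, |nu| = n. *)
Definition tail_equiv_by (E : graph) (x y : nat -> Edge E) (n m : nat) : Prop :=
  forall i, y (i + m)%nat = x (i + n)%nat.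

Definition in_orbit (E : graph) (x y : nat -> Edge E) : Prop :=
  ipath E y /\ exists n m, tail_equiv_by E x y n m.

Definition eventually_periodic (E : graph) (x : nat -> Edge E) : Prop :=
  exists N p, (0 < p)%nat /\ forall i, (N <= i)%nat -> x (i + p)%nat = x i.

Definition consistent (E : graph) (x : nat -> Edge E) : Prop :=
  ~ eventually_periodic E x.

(* r is the value l_x(y) = e^{-(|mu| - |nu|)} (well defined when [x] is consistent). *)
Definition lx_is (E : graph) (x y : nat -> Edge E) (r : R) : Prop :=
  ipath E y /\ exists n m, tail_equiv_by E x y n m /\ r = exp (INR n - INR m).

Fixpoint sum_pow (E : graph) (beta : R) (l : list ((nat -> Edge E) * R)) : R :=
  match l with
  | [] => 0
  | yr :: l' => Rpower (snd yr) beta + sum_pow E beta l'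
  end.

(* [x] is beta-summable: consistent and sum_{y in [x]} l_x(y)^beta < oo,
   i.e. the finite partial sums over distinct elements of [x] are bounded. *)
Definition beta_summable (E : graph) (x : nat -> Edge E) (beta : R) : Prop :=
  consistent E x /\
  exists B : R, forall l : list ((nat -> Edge E) * R),
    NoDup (map fst l) ->
    (forall yr, In yr l -> lx_is E x (fst yr) (snd yr)) ->
    sum_pow E beta l <= B.

(* The proof rests on three observations.
   - Finiteness: every finite path mu into s(x_i) gives an element
     mu x_i x_{i+1} ... of [x] with l_x = e^{i - |mu|}, hence with
     l_x^beta >= e^{beta i} > 0; distinct paths give distinct elements because
     [x] is consistent (the shift in a tail equivalence is unique).  So
     infinitely many paths into s(x_i) would make the sum unbounded.
   - Distinctness: if s(x_i) = s(x_j) with i < j, the segment x_i ... x_{j-1}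
     is a closed walk, and its powers are arbitrarily long paths into s(x_i).
   - Source: the lengths of paths into s(x_0) are bounded, and a path into
     s(x_0) that cannot be extended backwards starts at a source. *)
From Stdlib Require Import Reals List Lia Lra Classical.
Import ListNotations.
Open Scope R_scope.

Lemma last_cons {A : Type} (l : list A) (e d : A) : last (e :: l) d = last l e.
Proof.
  revert e d; induction l as [|f l IH]; intros e d; [reflexivity|].
  destruct l; [reflexivity|]. apply IH.
Qed.

Lemma infinite_distinct_witnesses {A : Type} (P : A -> Prop) :
  ~ (exists L, forall a, P a -> In a L) ->
  forall n, exists L, NoDup L /\ length L = n /\ (forall a, In a L -> P a).
Proof.
  intros Hinf n. induction n as [|n [L [Hnd [Hlen HP]]]].
  - exists []. repeat split; [constructor | now intros a []].
  - assert (Hnew : exists a, P a /\ ~ In a L).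
    { apply NNPP. intro Hno. apply Hinf. exists L. intros a Ha.
      apply NNPP. eauto. }
    destruct Hnew as [a [Ha Hout]]. exists (a :: L).
    repeat split; [now constructor | simpl; congruence |].
    intros b [<- | Hb]; auto.
Qed.

Lemma sum_pow_lower_bound (E : graph) (beta c : R) (l : list ((nat -> Edge E) * R)) :
  (forall yr, In yr l -> c <= Rpower (snd yr) beta) ->
  INR (length l) * c <= sum_pow E beta l.
Proof.
  induction l as [|yr l IH]; intro H; simpl length; [simpl; lra|].
  rewrite S_INR. simpl sum_pow.
  assert (Hyr := H yr (or_introl eq_refl)).
  assert (Hl := IH (fun z Hz => H z (or_intror Hz))). lra.
Qed.

Section FinitePaths.
Variable E : graph.

Lemma valid_fpath_cons (w : Vert E) (e : Edge E) (l : list (Edge E)) :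
  valid_fpath E (w, e :: l) <-> src E e = w /\ valid_fpath E (rng E e, l).
Proof.
  unfold valid_fpath; simpl. destruct l as [|f l]; simpl; [tauto|].
  split; intros [? [? ?]]; auto.
Qed.

Lemma frng_cons (w : Vert E) (e : Edge E) (l : list (Edge E)) :
  frng E (w, e :: l) = frng E (rng E e, l).
Proof.
  unfold frng; simpl. destruct l as [|f l]; [reflexivity|].
  now rewrite last_cons.
Qed.

Lemma fpath_start_unique (w w' : Vert E) (l : list (Edge E)) :
  valid_fpath E (w, l) -> valid_fpath E (w', l) ->
  frng E (w, l) = frng E (w', l) -> w = w'.
Proof.
  destruct l as [|e l]; [easy|].
  intros [Hw _]%valid_fpath_cons [Hw' _]%valid_fpath_cons _. congruence.
Qed.

Lemma valid_fpath_app (w : Vert E) (l1 l2 : list (Edge E)) :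
  valid_fpath E (w, l1) -> valid_fpath E (frng E (w, l1), l2) ->
  valid_fpath E (w, l1 ++ l2) /\ frng E (w, l1 ++ l2) = frng E (frng E (w, l1), l2).
Proof.
  revert w; induction l1 as [|e l1 IH]; intros w H1 H2; [easy|].
  simpl app. rewrite !frng_cons in *. rewrite valid_fpath_cons in H1 |- *.
  destruct H1 as [Hw H1]. destruct (IH _ H1 H2) as [Hv Hr]. tauto.
Qed.

Lemma ipath_segment (y : nat -> Edge E) (n : nat) :
  ipath E y ->
  valid_fpath E (src E (y 0%nat), map y (seq 0 n)) /\
  frng E (src E (y 0%nat), map y (seq 0 n)) = src E (y n).
Proof.
  intro Hy. induction n as [|n [Hv Hr]]; [now split|].
  rewrite seq_S, map_app. simpl map.
  assert (Hlast : valid_fpath E (src E (y n), [y n]) /\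
                  frng E (src E (y n), [y n]) = src E (y (S n)))
    by (split; [easy | apply Hy]).
  rewrite <- Hr in Hlast. destruct Hlast as [Hv1 Hr1].
  destruct (valid_fpath_app _ _ _ Hv Hv1) as [Hv' Hr']. now rewrite Hr', Hr1.
Qed.

Lemma finite_paths_bounded (v : Vert E) :
  finite_paths_into E v ->
  exists M, forall p, valid_fpath E p -> frng E p = v -> (length (snd p) <= M)%nat.
Proof.
  intros [L HL]. set (lengths := map (fun p : fpath E => length (snd p)) L).
  exists (list_max lengths). intros p Hv Hr.
  assert (Hall := proj1 (list_max_le lengths _) (le_n _)).
  rewrite Forall_forall in Hall.
  apply Hall, in_map_iff. eauto.
Qed.

(* A nonempty closed walk at v gives arbitrarily long paths into v. *)
Lemma closed_walk_not_finite (v : Vert E) (c : list (Edge E)) :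
  c <> [] -> valid_fpath E (v, c) -> frng E (v, c) = v ->
  ~ finite_paths_into E v.
Proof.
  intros Hc Hv Hr [M HM]%finite_paths_bounded.
  assert (Hpow : forall n, valid_fpath E (v, concat (repeat c n)) /\
                           frng E (v, concat (repeat c n)) = v).
  { induction n as [|n [Hvn Hrn]]; [easy|]. simpl.
    rewrite <- Hr in Hvn. destruct (valid_fpath_app _ _ _ Hv Hvn) as [Hv' Hr'].
    rewrite Hr', Hr. auto. }
  assert (Hlen : forall n, length (concat (repeat c n)) = (n * length c)%nat).
  { induction n as [|n IH]; [reflexivity|]. simpl. rewrite length_app, IH. lia. }
  destruct (Hpow (S M)) as [Hvn Hrn].
  specialize (HM _ Hvn Hrn). unfold snd in HM. rewrite Hlen in HM.
  destruct c; [congruence|]. simpl in HM. nia.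
Qed.

(* If the paths into v have bounded length, every path into v extends
   backwards to one that starts at a source: prefix edges while possible. *)
Lemma bounded_paths_source (v : Vert E) (M : nat) :
  (forall p, valid_fpath E p -> frng E p = v -> (length (snd p) <= M)%nat) ->
  forall p, valid_fpath E p -> frng E p = v ->
  exists q, valid_fpath E q /\ is_source E (fsrc E q) /\ frng E q = v.
Proof.
  intros HM p Hv Hr.
  assert (Hext : forall k (p : fpath E), valid_fpath E p -> frng E p = v ->
            (M < length (snd p) + k)%nat ->
            exists q, valid_fpath E q /\ is_source E (fsrc E q) /\ frng E q = v).
  { induction k as [|k IH]; intros [w l] Hvp Hrp Hk.
    - specialize (HM _ Hvp Hrp). lia.
    - destruct (classic (is_source E w)) as [Hs|Hs]; [now exists (w, l)|].
      apply not_all_not_ex in Hs as [e He].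
      apply (IH (src E e, e :: l)).
      + apply valid_fpath_cons. now rewrite He.
      + now rewrite frng_cons, He.
      + simpl in *. lia. }
  apply (Hext (S M) p Hv Hr). lia.
Qed.
End FinitePaths.

Section Orbits.
Variable E : graph.

Fixpoint prepend (l : list (Edge E)) (z : nat -> Edge E) : nat -> Edge E :=
  match l with
  | [] => z
  | e :: l' => fun k => match k with 0%nat => e | S k' => prepend l' z k' end
  end.

Lemma prepend_tail (l : list (Edge E)) (z : nat -> Edge E) (k : nat) :
  prepend l z (k + length l) = z k.
Proof.
  induction l as [|e l IH]; simpl; [now rewrite Nat.add_0_r|].
  now rewrite Nat.add_succ_r.
Qed.

Lemma prepend_ipath (z : nat -> Edge E) (w : Vert E) (l : list (Edge E)) :
  ipath E z -> valid_fpath E (w, l) -> frng E (w, l) = src E (z 0%nat) ->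
  ipath E (prepend l z).
Proof.
  intro Hz. revert w; induction l as [|e l IH]; intros w Hv Hr; [exact Hz|].
  rewrite valid_fpath_cons in Hv. destruct Hv as [_ Hv].
  rewrite frng_cons in Hr. intros [|k]; [|exact (IH _ Hv Hr k)].
  destruct l as [|f l]; [exact Hr|].
  simpl. now apply valid_fpath_cons in Hv as [-> _].
Qed.

Lemma prepend_inj (l l' : list (Edge E)) (z : nat -> Edge E) :
  length l = length l' -> (forall k, prepend l z k = prepend l' z k) -> l = l'.
Proof.
  revert l'; induction l as [|e l IH]; intros [|e' l'] Hlen Heq; try discriminate; [easy|].
  f_equal; [exact (Heq 0%nat)|].
  apply IH; [now injection Hlen | intro k; exact (Heq (S k))].
Qed.

(* In a consistent orbit the shift of a tail equivalence is unique; this is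
   why l_x is well defined. *)
Lemma tail_shift_unique (x y : nat -> Edge E) (n m m' : nat) :
  consistent E x -> tail_equiv_by E x y n m -> tail_equiv_by E x y n m' -> m = m'.
Proof.
  intros Hcons.
  enough (Hlt : forall m m', tail_equiv_by E x y n m -> tail_equiv_by E x y n m' ->
                  ~ (m < m')%nat).
  { intros H H'. destruct (Nat.lt_total m m') as [?|[?|?]]; auto; exfalso;
      [apply (Hlt m m') | apply (Hlt m' m)]; auto. }
  intros a b Ha Hb Hab. apply Hcons. exists n, (b - a)%nat. split; [lia|].
  intros i Hi.
  replace (i + (b - a))%nat with (i - n + (b - a) + n)%nat by lia.
  replace i with (i - n + n)%nat at 2 by lia.
  rewrite <- Ha, <- Hb. f_equal. lia.
Qed.

Definition orbit_point (x : nat -> Edge E) (i : nat) (p : fpath E) :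
  (nat -> Edge E) * R :=
  (prepend (snd p) (fun k => x (k + i)%nat), exp (INR i - INR (length (snd p)))).

Lemma orbit_point_lx (x : nat -> Edge E) (i : nat) (p : fpath E) :
  ipath E x -> valid_fpath E p -> frng E p = src E (x i) ->
  lx_is E x (fst (orbit_point x i p)) (snd (orbit_point x i p)).
Proof.
  intros Hx Hv Hr. destruct p as [w l]. split.
  - apply (prepend_ipath _ w); auto. intro k. exact (Hx (k + i)%nat).
  - exists i, (length l). split; [intro k; exact (prepend_tail l _ k) | reflexivity].
Qed.

Lemma orbit_point_inj (x : nat -> Edge E) (i : nat) (p q : fpath E) :
  consistent E x ->
  valid_fpath E p -> frng E p = src E (x i) ->
  valid_fpath E q -> frng E q = src E (x i) ->
  fst (orbit_point x i p) = fst (orbit_point x i q) -> p = q.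
Proof.
  intros Hcons Hvp Hrp Hvq Hrq Heq. destruct p as [w l], q as [w' l']. simpl in Heq.
  assert (Hlen : length l = length l').
  { apply (tail_shift_unique x (prepend l (fun k => x (k + i)%nat)) i); auto;
      intro k; [|rewrite Heq]; exact (prepend_tail _ _ k). }
  assert (Hl : l = l') by (apply (prepend_inj _ _ (fun k => x (k + i)%nat) Hlen); now rewrite Heq).
  subst l'. f_equal. apply (fpath_start_unique E _ _ l); congruence.
Qed.

Lemma orbit_point_weight (x : nat -> Edge E) (i : nat) (beta : R) (p : fpath E) :
  beta < 0 -> exp (beta * INR i) <= Rpower (snd (orbit_point x i p)) beta.
Proof.
  intro Hb. unfold orbit_point, Rpower; simpl. rewrite ln_exp.
  assert (0 <= INR (length (snd p))) by apply pos_INR.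
  assert (Hle : beta * INR i <= beta * (INR i - INR (length (snd p)))) by nra.
  destruct (Rle_lt_or_eq_dec _ _ Hle) as [Hlt | ->]; [left; now apply exp_increasing | lra].
Qed.
End Orbits.

(* Summability forces E^* s(x_i) to be finite: n distinct paths into s(x_i)
   contribute at least n e^{beta i} to the sum over [x]. *)
Lemma summable_finite_paths_into (E : graph) (x : nat -> Edge E) (beta : R) (i : nat) :
  ipath E x -> beta < 0 -> beta_summable E x beta ->
  finite_paths_into E (src E (x i)).
Proof.
  intros Hx Hb [Hcons [B HB]].
  apply NNPP. intro Hinf.
  set (v := src E (x i)). set (c := exp (beta * INR i)).
  destruct (INR_archimed c B (exp_pos _)) as [n Hn].
  assert (Hinf' : ~ exists L, forall p, valid_fpath E p /\ frng E p = v -> In p L)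
    by (intros [L HL]; apply Hinf; exists L; auto).
  destruct (infinite_distinct_witnesses _ Hinf' n)
    as [L [Hnd [Hlen HL]]].
  set (pts := map (orbit_point E x i) L).
  assert (Hle : sum_pow E beta pts <= B).
  { apply HB.
    - unfold pts. rewrite map_map. apply NoDup_map_NoDup_ForallPairs; auto.
      intros p q Hp Hq. destruct (HL p Hp), (HL q Hq). now apply orbit_point_inj.
    - intros yr [p [<- Hp]]%in_map_iff. destruct (HL p Hp).
      now apply orbit_point_lx. }
  assert (Hge : INR (length L) * c <= sum_pow E beta pts).
  { rewrite <- (length_map (orbit_point E x i)). apply sum_pow_lower_bound.
    intros yr [p [<- _]]%in_map_iff. exact (orbit_point_weight E x i beta p Hb). }
  rewrite Hlen in Hge. lra.
Qed.

(* If s(x_i) = s(x_j) with i < j, the segment x_i ... x_{j-1} is a closed walk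
   at s(x_i), which is impossible when E^* s(x_i) is finite. *)
Lemma finite_paths_distinct_sources (E : graph) (x : nat -> Edge E) (i j : nat) :
  ipath E x -> finite_paths_into E (src E (x i)) -> (i < j)%nat ->
  src E (x i) <> src E (x j).
Proof.
  intros Hx Hfin Hij Heq.
  set (y := fun k => x (k + i)%nat).
  assert (Hy : ipath E y) by (intro k; exact (Hx (k + i)%nat)).
  destruct (ipath_segment E y (j - i) Hy) as [Hv Hr].
  change (y 0%nat) with (x i) in Hv, Hr.
  apply (closed_walk_not_finite E (src E (x i)) (map y (seq 0 (j - i))));
    [| exact Hv | | exact Hfin].
  - destruct (j - i)%nat eqn:Hd; [lia | discriminate].
  - rewrite Hr, Heq. unfold y. f_equal. f_equal. lia.
Qed.

Theorem lemma7p2 (E : graph) (x : nat -> Edge E) (beta : R) :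
  countable_graph E ->
  ipath E x ->
  beta < 0 ->
  beta_summable E x beta ->
  (forall i : nat, finite_paths_into E (src E (x i))) /\
  (forall i j : nat, i <> j -> src E (x i) <> src E (x j)) /\
  (exists mu : fpath E,
     valid_fpath E mu /\ is_source E (fsrc E mu) /\ frng E mu = src E (x 0%nat)).
Proof.
  intros _ Hx Hb Hs.
  assert (Hfin : forall i, finite_paths_into E (src E (x i)))
    by (intro i; now apply (summable_finite_paths_into E x beta)).
  split; [exact Hfin | split].
  - intros i j Hij. destruct (Nat.lt_total i j) as [Hlt | [-> | Hlt]]; [| easy |].
    + now apply finite_paths_distinct_sources.
    + apply not_eq_sym. now apply finite_paths_distinct_sources.
  - destruct (finite_paths_bounded E _ (Hfin 0%nat)) as [M HM].
    now apply (bounded_paths_source E _ M HM (src E (x 0%nat), [])).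
Qed.
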